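(* Let $k$ be an algebraically closed field, $\Lambda$ a connected locally bounded $k$-category, and $G$ a group of $k$-linear automorphisms of $\Lambda$ which acts freely on $[\mathrm{ind}\Lambda]$. Let $L$ be a line in $\Lambda$ and $B_L$ its associated $\Lambda$-module. Then $G_L=G_{B_L}$.
   Context: A locally bounded $k$-category: endomorphism algebras local, distinct objects non-isomorphic, and for each object $x$, $\sum_y\dim_k\Lambda(x,y)<\infty$, $\sum_y\dim_k\Lambda(y,x)<\infty$. A $\Lambda$-module is a contravariant $k$-linear functor $\Lambda\to\mathrm{MOD}\,k$; $\mathrm{supp}M$ is the full subcategory of objects $x$ with $M(x)\neq0$. $[\mathrm{ind}\Lambda]$ is the set of isomorphism classes of finite dimensional indecomposable $\Lambda$-modules; for $g\in G$, ${}^gM=M\circ g^{-1}$; $G$ acts freely on $[\mathrm{ind}\Lambda]$ if ${}^gM\not\cong M$ for every indecomposable finite dimensional $M$ and $1\neq g\in G$. A full subcategory $L$ is convex if each path in the ordinary quiver of $\Lambda$ with source and terminal in $L$ has all its points in $L$. A line is a convex full subcategory isomorphic to the path category of a linear quiver (of type $A_n$, $A_\infty$ or $A_\infty^\infty$). For a line $L$, $B_L$ is the $\Lambda$-module with $B_L(x)=k$ for $x\in L$, $B_L(\alpha)\neq0$ for every nonzero morphism $\alpha$ of $L$, and $B_L(x)=0$ for $x\notin L$ (unique up to isomorphism). $G_L=\{g\in G\mid gL=L\}$ and $G_M=\{g\in G\mid {}^gM\cong M\}$. *)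

From HB Require Import structures.
From mathcomp Require Import all_boot all_order all_algebra.
From Stdlib Require Import Relation_Operators.
From Stdlib Require List.
Set Implicit Arguments.
Unset Strict Implicit.
Unset Printing Implicit Defensive.
Import GRing.Theory.
Local Open Scope ring_scope.

Record kcat (k : fieldType) := KCat {
  obj : Type;
  hom : obj -> obj -> vectType k;
  comp : forall x y z, hom y z -> hom x y -> hom x z;
  idm : forall x, hom x x;
  comp_linl : forall x y z (a : k) (g g' : hom y z) (f : hom x y),
      comp (a *: g + g') f = a *: comp g f + comp g' f;
  comp_linr : forall x y z (a : k) (g : hom y z) (f f' : hom x y),
      comp g (a *: f + f') = a *: comp g f + comp g f';
  compA : forall x y z w (h : hom z w) (g : hom y z) (f : hom x y),
      comp h (comp g f) = comp (comp h g) f;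
  comp_idl : forall x y (f : hom x y), comp (idm y) f = f;
  comp_idr : forall x y (f : hom x y), comp f (idm x) = f
}.
Arguments comp {k C x y z} : rename.
Arguments idm {k C} : rename.
Arguments hom {k} C : rename.
Arguments obj {k} C : rename.

Section Cat.
Variables (k : fieldType) (C : kcat k).

Definition is_iso x y (f : hom C x y) :=
  exists g : hom C y x, comp g f = idm x /\ comp f g = idm y.

Definition local_endo (x : obj C) :=
  idm x != 0 /\ forall f : hom C x x, is_iso f \/ is_iso (idm x - f).

Definition locally_bounded :=
  (forall x : obj C, local_endo x) /\
  (forall x y (f : hom C x y) (g : hom C y x),
      comp g f = idm x -> comp f g = idm y -> x = y) /\
  (* sum_y dim Lambda(x,y) < oo and sum_y dim Lambda(y,x) < oo *)
  (forall x, exists s : seq (obj C), forall y,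
      (\dim (fullv : {vspace hom C x y}) != 0)%N -> List.In y s) /\
  (forall x, exists s : seq (obj C), forall y,
      (\dim (fullv : {vspace hom C y x}) != 0)%N -> List.In y s).

Definition connected :=
  inhabited (obj C) /\
  forall x y, clos_refl_sym_trans (obj C)
                (fun a b => exists f : hom C a b, f != 0) x y.

Definition rad x y (f : hom C x y) :=
  forall g : hom C y x, is_iso (idm x - comp g f).

Definition rad2 x y (f : hom C x y) :=
  exists s : seq {z : obj C & (hom C x z * hom C z y)%type},
    List.Forall (fun t => rad (tagged t).1 /\ rad (tagged t).2) s /\
    f = \sum_(t <- s) comp (tagged t).2 (tagged t).1.

(* arrow x -> y of the ordinary quiver: rad(x,y) <> rad^2(x,y) *)
Definition qarrow x y := exists f : hom C x y, rad f /\ ~ rad2 f.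

Fixpoint qpath (x : obj C) (s : seq (obj C)) : Prop :=
  match s with
  | [::] => True
  | y :: s' => qarrow x y /\ qpath y s'
  end.

Definition convex (L : obj C -> Prop) :=
  forall x s, qpath x s -> L x -> L (last x s) ->
    forall z, List.In z (x :: s) -> L z.

Inductive lshape := An of nat | Ainf | Ainfinf.

Definition lvert (sh : lshape) (i : int) : Prop :=
  match sh with
  | An n => (0 <= i)%R /\ (i < n%:Z)%R
  | Ainf => (0 <= i)%R
  | Ainfinf => True
  end.

Definition lshape_ok sh := match sh with An n => (0 < n)%N | _ => true end.

(* orientation o i = true : arrow i -> i+1 ; false : arrow i+1 -> i.
   pathb o a b : there is a (unique) path from a to b. *)
Definition pathb (o : int -> bool) (a b : int) : bool :=
  if (a <= b)%R then all (fun i : nat => o (a + i%:Z)%R) (iota 0 `|b - a|%N)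
  else all (fun i : nat => ~~ o (b + i%:Z)%R) (iota 0 `|a - b|%N).

(* Hom spaces of the path category kQ: k if there is a path, 0 otherwise *)
Definition qhom (o : int -> bool) (a b : int) := 'rV[k]_(pathb o a b).

Definition qcomp o a b c (g : qhom o b c) (f : qhom o a b) : qhom o a c :=
  \row_(j < pathb o a c)
     (\sum_(i < pathb o b c) \sum_(i' < pathb o a b) g 0 i * f 0 i').

Definition qid o a : qhom o a a := const_mx 1.

Definition klinear (U V : lmodType k) (F : U -> V) :=
  forall (c : k) u v, F (c *: u + v) = c *: F u + F v.

(* L is a line: convex full subcategory isomorphic (as k-category) to the
   path category of a linear quiver of type A_n, A_oo or A_oo^oo. *)
Definition is_line (L : obj C -> Prop) :=
  convex L /\
  exists (sh : lshape) (o : int -> bool) (phi : obj C -> int)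
         (F : forall x y, hom C x y -> qhom o (phi x) (phi y)),
    lshape_ok sh /\
    (forall x, L x -> lvert sh (phi x)) /\
    (forall x y, L x -> L y -> phi x = phi y -> x = y) /\
    (forall i, lvert sh i -> exists x, L x /\ phi x = i) /\
    (forall x y, L x -> L y -> klinear (F x y) /\ bijective (F x y)) /\
    (forall x y z (g : hom C y z) (f : hom C x y), L x -> L y -> L z ->
        F x z (comp g f) = qcomp (F y z g) (F x y f)) /\
    (forall x, L x -> F x x (idm x) = qid o (phi x)).

Record kfun := KFun {
  fobj : obj C -> obj C;
  fmor : forall x y, hom C x y -> hom C (fobj x) (fobj y)
}.

Definition is_kauto (F : kfun) :=
  bijective (fobj F) /\
  (forall x y, klinear (@fmor F x y) /\ bijective (@fmor F x y)) /\
  (forall x y z (g : hom C y z) (f : hom C x y),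
      fmor F (comp g f) = comp (fmor F g) (fmor F f)) /\
  (forall x, fmor F (idm x) = idm (fobj F x)).

Definition kfun_comp (F H : kfun) : kfun :=
  KFun (fun x y f => fmor F (fmor H f) : hom C (fobj F (fobj H x)) (fobj F (fobj H y))).

Definition kfun_id : kfun := KFun (fun x y (f : hom C x y) => f).

(* equality of functors: equal as maps on the set of all morphisms *)
Definition kfun_eq (F H : kfun) :=
  forall x y (f : hom C x y),
    existT (fun p : obj C * obj C => hom C p.1 p.2) (fobj F x, fobj F y) (fmor F f)
  = existT (fun p : obj C * obj C => hom C p.1 p.2) (fobj H x, fobj H y) (fmor H f).

Record premod := PreMod {
  mval : obj C -> vectType k;
  mact : forall x y, hom C x y -> mval y -> mval x
}.

Arguments mact p {x y}.
Arguments mval p.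
Arguments fmor _ {x y}.
Definition is_module (M : premod) :=
  (forall x y (f : hom C x y), klinear (@mact M x y f)) /\
  (forall x y (a : k) (f f' : hom C x y) v,
      mact M (a *: f + f') v = a *: mact M f v + mact M f' v) /\
  (forall x y z (g : hom C y z) (f : hom C x y) v,
      mact M (comp g f) v = mact M f (mact M g v)) /\
  (forall x v, mact M (idm x) v = v).

Definition mod_iso (M N : premod) :=
  exists phi : forall x, mval M x -> mval N x,
    (forall x, klinear (phi x) /\ bijective (phi x)) /\
    (forall x y (f : hom C x y) (v : mval M y),
        phi x (mact M f v) = mact N f (phi y v)).

Definition twist (M : premod) (F : kfun) : premod :=
  PreMod (fun x y (f : hom C x y) => mact M (fmor F f)
            : mval M (fobj F y) -> mval M (fobj F x)).

Definition mod_fin_dim (M : premod) :=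
  exists s : seq (obj C), forall x,
    (\dim (fullv : {vspace mval M x}) != 0)%N -> List.In x s.

Definition indecomposable (M : premod) :=
  (exists x, (\dim (fullv : {vspace mval M x}) != 0)%N) /\
  forall U V : forall x, {vspace mval M x},
    (forall x y (f : hom C x y) v, v \in U y -> mact M f v \in U x) ->
    (forall x y (f : hom C x y) v, v \in V y -> mact M f v \in V x) ->
    (forall x, (U x + V x)%VS = fullv /\ (U x :&: V x)%VS = 0%VS) ->
    (forall x, U x = 0%VS) \/ (forall x, V x = 0%VS).

Definition is_BL (L : obj C -> Prop) (B : premod) :=
  is_module B /\
  (forall x, L x -> \dim (fullv : {vspace mval B x}) = 1%N) /\
  (forall x, ~ L x -> \dim (fullv : {vspace mval B x}) = 0%N) /\
  (forall x y (f : hom C x y), L x -> L y -> f != 0 ->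
      exists v, mact B f v != 0).

End Cat.

Record autgroup (k : fieldType) (C : kcat k) := AutGroup {
  gT : Type;
  gmul : gT -> gT -> gT;
  gone : gT;
  ginv : gT -> gT;
  gmulA : forall a b c, gmul a (gmul b c) = gmul (gmul a b) c;
  gmul1 : forall a, gmul gone a = a;
  gmulV : forall a, gmul (ginv a) a = gone;
  gact : gT -> kfun C;
  gact_auto : forall g, is_kauto (gact g);
  gact_mul : forall g h, kfun_eq (gact (gmul g h)) (kfun_comp (gact g) (gact h));
  gact_one : kfun_eq (gact gone) (@kfun_id _ C);
  gact_faithful : forall g, kfun_eq (gact g) (@kfun_id _ C) -> g = gone
}.

Section Act.
Variables (k : fieldType) (C : kcat k) (G : autgroup C).

Definition gtwist (g : gT G) (M : premod C) := twist M (gact (ginv g)).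

Definition acts_freely_on_ind :=
  forall M : premod C, is_module M -> mod_fin_dim M -> indecomposable M ->
    forall g : gT G, g <> gone G -> ~ mod_iso (gtwist g M) M.

Definition stab_line (L : obj C -> Prop) (g : gT G) :=
  forall y, L y <-> exists x, L x /\ fobj (gact g) x = y.

Definition stab_mod (M : premod C) (g : gT G) := mod_iso (gtwist g M) M.
End Act.

From Pilot Require Import Defs.
From mathcomp Require Import all_boot all_order all_algebra.
From mathcomp Require Import zify ring.
From Stdlib Require Import ClassicalEpsilon.
Set Implicit Arguments. Unset Strict Implicit. Unset Printing Implicit Defensive.
Import GRing.Theory.
Local Open Scope ring_scope.

(* If g L = L, then ^g B_L = B_L o g^-1 again has the defining properties of B_L, and any two
   modules with these properties are isomorphic; conversely an isomorphism ^g B_L ~= B_L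
   preserves supports, and the support of ^g B_L is g L.
   Uniqueness of B_L: a Hom space of the line is spanned by the morphism of the unique path
   of the linear quiver when there is one, and is 0 otherwise, so B_L is determined by the
   nonzero scalars beta(i, j) by which these path morphisms act on the one-dimensional values.
   They are multiplicative along paths, and two such systems beta, beta' differ by a
   coboundary: beta(i, j) r(i) = r(j) beta'(i, j), where r multiplies up the ratios of beta and
   beta' along consecutive edges. Rescaling by r is then an isomorphism. *)

Local Notation act M f := (@mact _ _ M _ _ f).

Section OneDimensional.
Variables (k : fieldType) (V : vectType k).

Definition coord1 (b : V) : {scalar V} := coord [tuple b] 0.

Lemma coord1_scale (b : V) c : b != 0 -> coord1 b (c *: b) = c.
Proof.
move=> b_neq0; rewrite linearZ /= (coord_free 0 0) ?seq1_free //.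
by rewrite eqxx mulr1.
Qed.

Lemma coord1K (b v : V) :
  b != 0 -> \dim (fullv : {vspace V}) = 1%N -> coord1 b v *: b = v.
Proof.
move=> b_neq0 dim1; have : v \in <<[tuple b]>>%VS.
  suff -> : <<[tuple b]>>%VS = fullv by rewrite memvf.
  by apply/eqP; rewrite eqEdim subvf span_seq1 dim_vline b_neq0 dim1.
by move/coord_span=> {2}->; rewrite big_ord1.
Qed.

Lemma dimv0_eq0 (v : V) : \dim (fullv : {vspace V}) = 0%N -> v = 0.
Proof.
move/eqP; rewrite dimv_eq0 => /eqP full0.
by apply/eqP; rewrite -memv0 -full0 memvf.
Qed.

Lemma vpick_fullv_neq0 :
  \dim (fullv : {vspace V}) != 0%N -> vpick (fullv : {vspace V}) != 0.
Proof. by rewrite vpick0 dimv_eq0. Qed.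

End OneDimensional.

Section KLinear.
Variables (k : fieldType) (U W : lmodType k) (f : U -> W).
Hypothesis lin_f : klinear f.

Lemma klinear0 : f 0 = 0.
Proof.
have := lin_f 1 0 0; rewrite !scale1r addr0 => f0D.
by apply: (@addrI _ (f 0)); rewrite addr0 -f0D.
Qed.

Lemma klinearZ c u : f (c *: u) = c *: f u.
Proof. by have := lin_f c u 0; rewrite !addr0 klinear0 addr0. Qed.

Lemma klinear_neq0 u : f u != 0 -> u != 0.
Proof. by apply: contra_neq => ->; rewrite klinear0. Qed.

Lemma klinear_inj_neq0 u : injective f -> u != 0 -> f u != 0.
Proof.
by move=> f_inj; apply: contra_neq => fu0; apply: f_inj; rewrite fu0 klinear0.
Qed.

End KLinear.

Section Modules.
Variables (k : fieldType) (C : kcat k) (M : premod C).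
Hypothesis modM : is_module M.

Lemma klinear_mact x y (f : Defs.hom C x y) : klinear (act M f).
Proof. by case: modM. Qed.

Lemma klinear_mact_hom x y (v : mval M y) : klinear (fun f : Defs.hom C x y => act M f v).
Proof. by case: modM => _ [lin _] a f f'; apply: lin. Qed.

Lemma mact0 x y (f : Defs.hom C x y) : act M f 0 = 0.
Proof. exact/klinear0/klinear_mact. Qed.

Lemma mactZ x y (f : Defs.hom C x y) c v : act M f (c *: v) = c *: act M f v.
Proof. exact/klinearZ/klinear_mact. Qed.

Lemma mact0f x y (v : mval M y) : act M (0 : Defs.hom C x y) v = 0.
Proof. exact: (klinear0 (klinear_mact_hom v)). Qed.

Lemma mactZf x y (f : Defs.hom C x y) c v : act M (c *: f) v = c *: act M f v.
Proof. exact: (klinearZ (klinear_mact_hom v)). Qed.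

Lemma mact_comp x y z (g : Defs.hom C y z) (f : Defs.hom C x y) v :
  act M (Defs.comp g f) v = act M f (act M g v).
Proof. by case: modM => _ [_ []]. Qed.

End Modules.

Lemma mod_iso_support (k : fieldType) (C : kcat k) (M N : premod C) x :
  mod_iso M N -> (exists v : mval M x, v != 0) <-> (exists w : mval N x, w != 0).
Proof.
case=> phi [/(_ x) [lin [psi phiK psiK]] _]; split=> [[v v_neq0] | [w w_neq0]].
  by exists (phi x v); apply: klinear_inj_neq0 (can_inj phiK) _.
by exists (psi w); apply: (klinear_neq0 lin); rewrite psiK.
Qed.

Section BLModules.
Variables (k : fieldType) (C : kcat k) (L : obj C -> Prop).

Definition bvec (B : premod C) x : mval B x := vpick fullv.

Definition beta (B : premod C) x y (f : Defs.hom C x y) : k :=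
  coord1 (bvec B x) (act B f (bvec B y)).

Variable B : premod C.
Hypothesis BL : is_BL L B.

Let modB : is_module B. Proof. by case: BL. Qed.

Lemma bvec_neq0 x : L x -> bvec B x != 0.
Proof. by case: BL => _ [dim1 _] /dim1 dimx; apply: vpick_fullv_neq0; rewrite dimx. Qed.

Lemma BL_expand x (v : mval B x) : L x -> coord1 (bvec B x) v *: bvec B x = v.
Proof. by case: BL => _ [dim1 _] Lx; apply: coord1K (bvec_neq0 Lx) (dim1 x Lx). Qed.

Lemma BL_out x (v : mval B x) : ~ L x -> v = 0.
Proof. by case: BL => _ [_ [dim0 _]] /dim0; apply: dimv0_eq0. Qed.

Lemma BL_out_eq x (u v : mval B x) : ~ L x -> u = v.
Proof. by move=> nLx; rewrite (BL_out u nLx) (BL_out v nLx). Qed.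

Lemma BL_supportP x : L x <-> exists v : mval B x, v != 0.
Proof.
split=> [Lx | [v v_neq0]]; first by exists (bvec B x); apply: bvec_neq0.
by apply: NNPP => /(BL_out v) v0; rewrite v0 eqxx in v_neq0.
Qed.

Lemma mact_bvec x y (f : Defs.hom C x y) :
  L x -> act B f (bvec B y) = beta B f *: bvec B x.
Proof. by move=> Lx; rewrite BL_expand. Qed.

Lemma beta0 x y : beta B (0 : Defs.hom C x y) = 0.
Proof. by rewrite /beta mact0f // linear0. Qed.

Lemma betaZ x y (f : Defs.hom C x y) c : beta B (c *: f) = c * beta B f.
Proof. by rewrite /beta mactZf // linearZ. Qed.

Lemma beta_comp x y z (g : Defs.hom C y z) (f : Defs.hom C x y) :
  L x -> L y -> beta B (Defs.comp g f) = beta B f * beta B g.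
Proof.
move=> Lx Ly; rewrite {1}/beta mact_comp // mact_bvec // mactZ // mact_bvec //.
by rewrite scalerA coord1_scale ?bvec_neq0 // mulrC.
Qed.

Lemma beta_neq0 x y (f : Defs.hom C x y) : L x -> L y -> f != 0 -> beta B f != 0.
Proof.
case: BL => _ [_ [_ act_neq0]] Lx Ly /(act_neq0 _ _ _ Lx Ly) [v].
rewrite -(BL_expand v Ly) mactZ // mact_bvec // scalerA.
by apply: contra_neq => ->; rewrite mulr0 scale0r.
Qed.

End BLModules.

Lemma BL_iso (k : fieldType) (C : kcat k) (L : obj C -> Prop) (B B' : premod C)
    (rho : obj C -> k) :
  is_BL L B -> is_BL L B' -> (forall x, L x -> rho x != 0) ->
  (forall x y (f : Defs.hom C x y), L x -> L y -> beta B f * rho x = rho y * beta B' f) ->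
  mod_iso B B'.
Proof.
move=> BL BL' rho_neq0 beta_rho; have [modB modB'] : is_module B /\ is_module B'.
  by case: BL; case: BL'.
exists (fun x v => (coord1 (bvec B x) v * rho x) *: bvec B' x); split=> [x | x y f v].
  split=> [c u v | ]; first by rewrite linearP /= mulrDl scalerDl -mulrA scalerA.
  have [Lx | nLx] := classic (L x); last first.
    by exists (fun=> 0) => v; apply: BL_out_eq nLx.
  exists (fun w => (coord1 (bvec B' x) w / rho x) *: bvec B x) => [v | w].
    by rewrite coord1_scale ?(bvec_neq0 BL') // mulfK ?rho_neq0 ?(BL_expand BL).
  by rewrite coord1_scale ?(bvec_neq0 BL) // divfK ?rho_neq0 ?(BL_expand BL').
have [Lx | nLx] := classic (L x); last exact: (BL_out_eq BL').
have [Ly | nLy] := classic (L y); last first.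
  by rewrite (BL_out BL v nLy) mact0 // !linear0 !mul0r !scale0r mact0.
rewrite -{1}(BL_expand BL v Ly) !mactZ // (mact_bvec BL f Lx) (mact_bvec BL' f Lx).
rewrite !scalerA coord1_scale ?(bvec_neq0 BL) //.
by rewrite -!mulrA beta_rho.
Qed.

Lemma all_iotaP (P : int -> bool) (a : int) (n : nat) :
  all (fun m : nat => P (a + m%:Z)) (iota 0 n) <-> (forall m, a <= m < a + n%:Z -> P m).
Proof.
split=> [/allP P_iota m m_in | P_range].
  have -> : m = a + `|m - a|%N%:Z by lia.
  by apply: P_iota; rewrite mem_iota; lia.
by apply/allP => m; rewrite mem_iota => m_lt; apply: P_range; lia.
Qed.

Section LinearQuiverPaths.
Variable o : int -> bool.

Lemma pathbP (a b : int) :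
  pathb o a b <-> (forall m, a <= m < b -> o m) /\ (forall m, b <= m < a -> ~~ o m).
Proof.
rewrite /pathb; case: ifP => le_ab.
  rewrite all_iotaP; have -> : a + `|b - a|%N%:Z = b by lia.
  by split=> [o_ab | []//]; split=> // m; lia.
rewrite (all_iotaP (fun m => ~~ o m)); have -> : b + `|a - b|%N%:Z = a by lia.
by split=> [o_ba | []//]; split=> // m; lia.
Qed.

Lemma pathb_refl a : pathb o a a.
Proof. by apply/pathbP; split=> m; lia. Qed.

Lemma pathb_succ a : pathb o a (a + 1) = o a.
Proof.
rewrite /pathb; have -> : (a <= a + 1) = true by lia.
by rewrite addrAC subrr add0r /= addr0 andbT.
Qed.

Lemma pathb_pred a : pathb o (a + 1) a = ~~ o a.
Proof.
rewrite /pathb; have -> : (a + 1 <= a) = false by lia.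
by rewrite addrAC subrr add0r /= addr0 andbT.
Qed.

Lemma pathb_first_up a b :
  a < b -> pathb o a b -> pathb o a (a + 1) /\ pathb o (a + 1) b.
Proof.
by move=> lt_ab /pathbP [fwd _]; split; apply/pathbP; split=> m *; try apply: fwd; lia.
Qed.

Lemma pathb_first_down a b :
  b <= a -> pathb o (a + 1) b -> pathb o (a + 1) a /\ pathb o a b.
Proof.
by move=> le_ba /pathbP [_ back]; split; apply/pathbP; split=> m *; try apply: back; lia.
Qed.

End LinearQuiverPaths.

Lemma int_potential (k : fieldType) (c : int -> k) :
  exists r : int -> k, (forall i, r i != 0) /\ (forall i, c i != 0 -> r (i + 1) = r i * c i).
Proof.
pose c' i := if c i == 0 then 1 else c i.
have c'_neq0 i : c' i != 0 by rewrite /c'; case: ifPn; rewrite ?oner_eq0.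
pose r (i : int) := match i with
  | Posz n => \prod_(m < n) c' m%:Z
  | Negz n => \prod_(m < n.+1) (c' (- m.+1%:Z))^-1 end.
exists r; split=> [[n | n] | i c_neq0].
- by rewrite /r prodf_seq_neq0; apply/allP => m _ /=.
- by rewrite /r prodf_seq_neq0; apply/allP => m _ /=; rewrite invr_eq0.
have -> : c i = c' i by rewrite /c' (negPf c_neq0).
case: i {c_neq0} => [n | [|n]].
- have -> : Posz n + 1 = Posz n.+1 by lia.
  by rewrite /r big_ord_recr.
- have -> : Negz 0 + 1 = Posz 0 by lia.
  by rewrite /r big_ord0 big_ord1 NegzE mulVf.
have -> : Negz n.+1 + 1 = Negz n by lia.
by rewrite /r [in RHS]big_ord_recr /= NegzE -mulrA mulVf ?mulr1.
Qed.

Section PathCocycles.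
Variables (k : fieldType) (o : int -> bool) (V : int -> Prop).

Definition path_cocycle (b : int -> int -> k) :=
  (forall i j l, V i -> V j -> V l -> pathb o i j -> pathb o j l -> b i l = b i j * b j l) /\
  (forall i j, V i -> V j -> pathb o i j -> b i j != 0).

Lemma path_cocycle_refl b i : path_cocycle b -> V i -> b i i = 1.
Proof.
move=> [b_mul b_neq0] Vi; have p_ii := pathb_refl o i.
apply: (mulfI (b_neq0 _ _ Vi Vi p_ii)).
by rewrite mulr1 -b_mul.
Qed.

Hypothesis V_interval : forall i j m, V i -> V j -> i <= m <= j -> V m.

Lemma path_coboundary b b' : path_cocycle b -> path_cocycle b' ->
  exists r : int -> k, (forall i, r i != 0) /\
    forall i j, V i -> V j -> pathb o i j -> b i j * r i = r j * b' i j.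
Proof.
move=> cb cb'; have [b_mul b_neq0] := cb; have [b'_mul b'_neq0] := cb'.
pose c i := if o i then b i (i + 1) / b' i (i + 1) else b' (i + 1) i / b (i + 1) i.
have c_neq0 i : V i -> V (i + 1) -> c i != 0.
  move=> Vi Vi1; rewrite /c; case: ifPn => o_i.
    by rewrite mulf_neq0 ?invr_eq0 ?b_neq0 ?b'_neq0 ?pathb_succ.
  by rewrite mulf_neq0 ?invr_eq0 ?b_neq0 ?b'_neq0 ?pathb_pred.
have [r [r_neq0 r_succ]] := int_potential c.
exists r; split=> // i j Vi Vj; move Edist: `|j - i|%N => n.
elim: n i Vi Edist => [|n IH] i Vi dist p_ij.
  have -> : j = i by lia.
  by rewrite !path_cocycle_refl // mulrC.
have [lt_ij | lt_ji] : i < j \/ j < i by lia.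
  have [p_i1 p_1j] := pathb_first_up lt_ij p_ij.
  have Vi1 : V (i + 1) by apply: V_interval Vi Vj _; lia.
  have o_i : o i by rewrite -pathb_succ.
  have := IH _ Vi1 ltac:(lia) p_1j; rewrite r_succ ?c_neq0 // /c o_i.
  rewrite (b_mul _ _ _ Vi Vi1 Vj p_i1 p_1j) (b'_mul _ _ _ Vi Vi1 Vj p_i1 p_1j) => IH1.
  by rewrite [RHS]mulrCA -IH1; field; rewrite b'_neq0.
have [m Em] : exists m, i = m + 1 by exists (i - 1); lia.
subst i; have le_jm : j <= m by lia.
have [p_1m p_mj] := pathb_first_down le_jm p_ij.
have Vm : V m by apply: V_interval Vj Vi _; lia.
have /negPf o_m : ~~ o m by rewrite -pathb_pred.
have := IH _ Vm ltac:(lia) p_mj; rewrite r_succ ?c_neq0 // /c o_m => IHm.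
rewrite (b_mul _ _ _ Vi Vm Vj p_1m p_mj) (b'_mul _ _ _ Vi Vm Vj p_1m p_mj).
by rewrite [RHS]mulrCA -IHm; field; rewrite b_neq0.
Qed.

End PathCocycles.

Lemma lvert0 sh : lshape_ok sh -> lvert sh 0.
Proof. by case: sh => [n||] //=; lia. Qed.

Lemma lvert_interval sh (i j m : int) :
  lvert sh i -> lvert sh j -> i <= m <= j -> lvert sh m.
Proof. by case: sh => [n||] /=; lia. Qed.

Lemma row_dim0 (k : fieldType) n (u : 'rV[k]_n) : n = 0%N -> u = 0.
Proof. by move=> n0; subst n; apply: thinmx0. Qed.

Lemma row_dim1 (k : fieldType) n (u : 'rV[k]_n) :
  n = 1%N -> exists c, u = c *: const_mx 1.
Proof. by move=> n1; subst n; exists (u 0 0); apply/rowP => j; rewrite ord1 !mxE mulr1. Qed.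

Lemma const_mx1_neq0 (k : fieldType) n : n = 1%N -> (const_mx 1 : 'rV[k]_n) != 0.
Proof.
by move=> n1; subst n; apply/eqP => /rowP /(_ 0); rewrite !mxE; apply/eqP/oner_neq0.
Qed.

Lemma qcomp_const1 (k : fieldType) (o : int -> bool) a b c :
  pathb o a b -> pathb o b c ->
  qcomp (const_mx 1 : qhom k o b c) (const_mx 1 : qhom k o a b) = const_mx 1.
Proof.
move=> p_ab p_bc; apply/rowP => j; rewrite !mxE.
under eq_bigr do under eq_bigr do rewrite !mxE mulr1.
by rewrite !sumr_const !card_ord p_ab p_bc.
Qed.

Section LineModules.
Variables (k : fieldType) (C : kcat k) (L : obj C -> Prop) (sh : lshape) (o : int -> bool)
  (ph : obj C -> int) (F : forall x y, Defs.hom C x y -> qhom k o (ph x) (ph y)).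
Hypotheses (ph_vert : forall x, L x -> lvert sh (ph x))
  (ph_inj : forall x y, L x -> L y -> ph x = ph y -> x = y)
  (ph_surj : forall i, lvert sh i -> exists x, L x /\ ph x = i)
  (F_iso : forall x y, L x -> L y -> klinear (@F x y) /\ bijective (@F x y))
  (F_comp : forall x y z (g : Defs.hom C y z) (f : Defs.hom C x y), L x -> L y -> L z ->
     F (Defs.comp g f) = qcomp (F g) (F f)).

Definition path_hom x y : Defs.hom C x y :=
  epsilon (inhabits 0) (fun h => F h = const_mx 1).

Section Homs.
Variables (x y : obj C).
Hypotheses (Lx : L x) (Ly : L y).

Let F_lin : klinear (@F x y). Proof. by case: (F_iso Lx Ly). Qed.
Let F_inj : injective (@F x y). Proof. by case: (F_iso Lx Ly) => _ /bij_inj. Qed.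

Lemma path_homE : F (path_hom x y) = const_mx 1.
Proof.
apply: (@epsilon_spec _ (inhabits 0) (fun h => F h = const_mx 1)).
by have [_ [G _ FK]] := F_iso Lx Ly; exists (G (const_mx 1)); rewrite FK.
Qed.

Lemma hom_eq0 (f : Defs.hom C x y) : ~~ pathb o (ph x) (ph y) -> f = 0.
Proof.
by move/negPf=> np; apply: F_inj; rewrite (klinear0 F_lin); apply: row_dim0; rewrite np.
Qed.

Lemma hom_path_multiple (f : Defs.hom C x y) :
  pathb o (ph x) (ph y) -> exists c, f = c *: path_hom x y.
Proof.
move=> p; have [|c Ff] := row_dim1 (F f); first by rewrite p.
by exists c; apply: F_inj; rewrite (klinearZ F_lin) path_homE.
Qed.

Lemma path_hom_neq0 : pathb o (ph x) (ph y) -> path_hom x y != 0.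
Proof.
move=> p; apply: (klinear_neq0 F_lin); rewrite path_homE.
by apply: const_mx1_neq0; rewrite p.
Qed.

End Homs.

Lemma path_hom_comp x y z : L x -> L y -> L z ->
  pathb o (ph x) (ph y) -> pathb o (ph y) (ph z) ->
  path_hom x z = Defs.comp (path_hom y z) (path_hom x y).
Proof.
move=> Lx Ly Lz p_xy p_yz; have [_ /bij_inj F_inj] := F_iso Lx Lz.
by apply: F_inj; rewrite F_comp // !path_homE // qcomp_const1.
Qed.

Variable x0 : obj C.

(* Off the line, [vertex i] is the junk default [x0]. *)
Definition vertex i : obj C := epsilon (inhabits x0) (fun x => L x /\ ph x = i).

Lemma vertexP i : lvert sh i -> L (vertex i) /\ ph (vertex i) = i.
Proof. by move/ph_surj; rewrite /vertex; apply: epsilon_spec. Qed.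

Lemma vertex_ph x : L x -> vertex (ph x) = x.
Proof. by move=> Lx; have [Lv ph_v] := vertexP (ph_vert Lx); apply: ph_inj. Qed.

Definition path_beta (B : premod C) i j := beta B (path_hom (vertex i) (vertex j)).

Lemma path_beta_cocycle B : is_BL L B -> path_cocycle o (lvert sh) (path_beta B).
Proof.
move=> BL; split=> [i j l Vi Vj Vl p_ij p_jl | i j Vi Vj p_ij]; rewrite /path_beta.
  have [[Li phi] [Lj phj] [Ll phl]] := And3 (vertexP Vi) (vertexP Vj) (vertexP Vl).
  by rewrite (path_hom_comp Li Lj Ll) ?(beta_comp BL) ?phi ?phj ?phl.
have [[Li phi] [Lj phj]] := conj (vertexP Vi) (vertexP Vj).
by apply: (beta_neq0 BL) => //; apply: path_hom_neq0; rewrite ?phi ?phj.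
Qed.

Lemma beta_rescale (B B' : premod C) (r : int -> k) : is_BL L B -> is_BL L B' ->
  (forall i j, lvert sh i -> lvert sh j -> pathb o i j ->
     path_beta B i j * r i = r j * path_beta B' i j) ->
  forall x y (f : Defs.hom C x y), L x -> L y -> beta B f * r (ph x) = r (ph y) * beta B' f.
Proof.
move=> BL BL' cob x y f Lx Ly; have [p | np] := boolP (pathb o (ph x) (ph y)); last first.
  by rewrite (hom_eq0 Lx Ly f np) (beta0 BL) (beta0 BL') mul0r mulr0.
have [c ->] := hom_path_multiple Lx Ly f p.
rewrite (betaZ BL) (betaZ BL') -mulrA [RHS]mulrCA.
have := cob _ _ (ph_vert Lx) (ph_vert Ly) p.
by rewrite /path_beta !vertex_ph // => ->.
Qed.

End LineModules.

Lemma BL_unique (k : fieldType) (C : kcat k) (L : obj C -> Prop) (B B' : premod C) :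
  is_line L -> is_BL L B -> is_BL L B' -> mod_iso B B'.
Proof.
case=> _ [sh [o [ph [F [sh_ok [ph_vert [ph_inj [ph_surj [F_iso [F_comp _]]]]]]]]]] BL BL'.
have [x0 _] := ph_surj _ (lvert0 sh_ok).
have cocycle := path_beta_cocycle ph_surj F_iso F_comp x0.
have [r [r_neq0 r_cob]] :=
  path_coboundary (@lvert_interval sh) (cocycle _ BL) (cocycle _ BL').
apply: (BL_iso (rho := r \o ph) BL BL') => [x _ | x y f Lx Ly]; first exact: r_neq0.
exact: (beta_rescale ph_vert ph_inj ph_surj F_iso BL BL' r_cob).
Qed.

Lemma twist_BL (k : fieldType) (C : kcat k) (L L' : obj C -> Prop) (B : premod C)
    (F : kfun C) :
  is_kauto F -> (forall x, L (fobj F x) <-> L' x) -> is_BL L B -> is_BL L' (twist B F).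
Proof.
move=> [_ [F_iso [F_comp F_id]]] LL' [[linB [linB_hom [B_comp B_id]]] [dim1 [dim0 act_neq0]]].
split; first split => [x y f | ]; first exact: linB.
  split=> [x y a f f' v /= | ]; first by case: (F_iso x y) => F_lin _; rewrite F_lin linB_hom.
  by split=> [x y z g f v | x v] /=; rewrite ?F_comp ?F_id.
split=> [x /LL'/dim1 // | ]; split=> [x nLx | x y f Lx Ly f_neq0].
  by apply: dim0; rewrite LL'.
have [F_lin [G FK _]] := F_iso x y.
exact: act_neq0 _ _ (fmor F f) ((LL' x).2 Lx) ((LL' y).2 Ly)
  (klinear_inj_neq0 F_lin (can_inj FK) f_neq0).
Qed.

Section GroupAction.
Variables (k : fieldType) (C : kcat k) (G : autgroup C).

Local Notation gobj g := (fobj (gact g)).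

Lemma gobjM (g h : gT G) x : gobj (gmul g h) x = gobj g (gobj h x).
Proof. by have [] := congr1 (@projT1 _ _) (gact_mul g h (idm x)). Qed.

Lemma gobj1 x : gobj (gone G) x = x.
Proof. by have [] := congr1 (@projT1 _ _) (gact_one G (idm x)). Qed.

Lemma gobjK (g : gT G) x : gobj (ginv g) (gobj g x) = x.
Proof. by rewrite -gobjM gmulV gobj1. Qed.

Lemma gobjVK (g : gT G) x : gobj g (gobj (ginv g) x) = x.
Proof.
by have [[h invgK _] _] := gact_auto (ginv g); apply: (can_inj invgK); rewrite gobjK.
Qed.

Lemma stab_lineE (L : obj C -> Prop) (g : gT G) :
  stab_line L g <-> forall x, L (gobj (ginv g) x) <-> L x.
Proof.
split=> [gL x | ginvL y].
  split=> [Lx | /gL [x' [Lx' <-]]]; last by rewrite gobjK.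
  by apply/gL; exists (gobj (ginv g) x); rewrite gobjVK.
split=> [Ly | [x [Lx <-]]]; last by apply/ginvL; rewrite gobjK.
by exists (gobj (ginv g) y); split; [apply/ginvL | apply: gobjVK].
Qed.

End GroupAction.

Unset Implicit Arguments.

Theorem lemma3p2 (k : closedFieldType) (C : kcat k) (G : autgroup C)
  (L : obj C -> Prop) (B : premod C) :
  locally_bounded C -> connected C -> acts_freely_on_ind G ->
  is_line L -> is_BL L B ->
  forall g : gT G, stab_line L g <-> stab_mod B g.
Proof.
move=> _ _ _ line_L BL g; rewrite stab_lineE.
have BLg := twist_BL (gact_auto (ginv g)) (fun x => iff_refl _) BL.
split=> [ginvL | iso x].
  exact: BL_unique line_L (twist_BL (gact_auto (ginv g)) ginvL BL) BL.
apply: (iff_trans (BL_supportP BLg x)); apply: (iff_trans (mod_iso_support x iso)).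
exact: iff_sym (BL_supportP BL x).
Qed.
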